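(* Consider the Cannings model described in the context. For $r\in\mathbb{N}$, $k_1,\dots,k_r\ge2$ and $N>k_1+\cdots+k_r$, $$\frac{E[(\nu_{1,N})_{k_1}\cdots(\nu_{r,N})_{k_r}]}{(N)_{k_1+\cdots+k_r}}=E\Big[\frac{(X_{1,N})_{k_1}\cdots(X_{r,N})_{k_r}}{(S_N)_{k_1+\cdots+k_r}}\Big].$$ In particular, $$c_N:=\frac{E[(\nu_{1,N})_2]}{N-1}=N\,E\Big[\frac{X_{1,N}(X_{1,N}-1)}{S_N(S_N-1)}\Big].$$ Moreover, $c_N\ge\frac{\mathbb{P}(X_{1,N}\ge2)^2}{2N}$.
   Context: Cannings model with i.i.d. offspring numbers and sampling: for each $N$, let $X_{1,N},\dots,X_{N,N}$ be i.i.d. random variables with values in $\{1,2,\dots\}$ (the number of offspring of the $N$ individuals of a generation), and $S_N=X_{1,N}+\cdots+X_{N,N}$. Conditionally on these, $N$ of the $S_N$ offspring are sampled uniformly at random without replacement to form the next generation, and $\nu_{k,N}$ denotes the number of sampled offspring of the $k$th individual (so $\sum_k\nu_{k,N}=N$). This is repeated independently in each generation. $(x)_k=x(x-1)\cdots(x-k+1)$ denotes the falling factorial. *)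

(* Discrete rendering of the Cannings
   model: the law of (X_{1,N},...,X_{N,N}, nu_{1,N},...,nu_{N,N}) is written
   down explicitly, and expectations of nonnegative functionals are
   (extended-real) sums against this joint probability mass function. *)
From HB Require Import structures.
From mathcomp Require Import all_boot all_order all_algebra.
From mathcomp Require Import all_classical all_reals all_analysis.
Set Implicit Arguments. Unset Strict Implicit. Unset Printing Implicit Defensive.
Import Order.TTheory GRing.Theory Num.Theory.
Local Open Scope ring_scope.

Definition offspring_law (R : realType) (p : nat -> R) : Prop :=
  [/\ forall m, 0 <= p m, p 0%N = 0 & (\esum_(m in setT) (p m)%:E = 1)%E].

(* the j-th coordinate (0-based) of a configuration, 0 if out of range *)
Definition indiv (N : nat) (x : {ffun 'I_N -> nat}) (j : nat) : nat :=
  if @insub nat (fun i => i < N)%N 'I_N j is Some i then x i else 0%N.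

Definition sum_offspring (N : nat) (x : {ffun 'I_N -> nat}) : nat := (\sum_i x i)%N.

(* Conditional law of (nu_1,...,nu_N) given (X_1,...,X_N) = x: sampling N of
   the S = x_1+...+x_N offspring uniformly without replacement
   (multivariate hypergeometric law). *)
Definition sample_law (R : realType) (N : nat) (x n : {ffun 'I_N -> nat}) : R :=
  if (\sum_i n i == N)%N
  then (\prod_i 'C(x i, n i))%:R / 'C(sum_offspring x, N)%:R
  else 0.

Definition cannings_pmf (R : realType) (N : nat) (p : nat -> R)
  (x n : {ffun 'I_N -> nat}) : R :=
  (\prod_i p (x i)) * sample_law R x n.

Definition cannings_E (R : realType) (N : nat) (p : nat -> R)
  (f : {ffun 'I_N -> nat} -> {ffun 'I_N -> nat} -> \bar R) : \bar R :=
  (\esum_(xn in [set: {ffun 'I_N -> nat} * {ffun 'I_N -> nat}])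
     (cannings_pmf p xn.1 xn.2)%:E * f xn.1 xn.2)%E.

Definition coal_prob (R : realType) (N : nat) (p : nat -> R) : \bar R :=
  (@cannings_E R N p (fun x n => ((indiv n 0) ^_ 2)%:R%:E) * ((N.-1)%:R^-1)%:E)%E.

Definition prob_ge2 (R : realType) (p : nat -> R) : \bar R :=
  (\esum_(m in [set m : nat | (2 <= m)%N]) (p m)%:E)%E.

(* Conditionally on X = x, the vector nu is multivariate hypergeometric, and
   its joint factorial moments are explicit: with S = x_1 + ... + x_N and
   K = k_1 + ... + k_N <= N,
      E[prod_i (nu_i)_{k_i} | X = x] = prod_i (x_i)_{k_i} (N)_K / (S)_K.
   This rests on a Vandermonde-type count, obtained by comparing coefficients
   of 'X^N in  prod_i sum_j C(x_i, j) (j)_{k_i} 'X^j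
                = prod_i (x_i)_{k_i} 'X^{k_i} ('X + 1)^(x_i - k_i).
   Averaging over X (the expectation is an extended-real sum against the
   joint mass function) gives the moment identity of part 1, for any r <= N
   and K <= N, and part 2 is its instance r = 1, k_1 = 2.
   For part 3, exchangeability of X turns N E[X_1(X_1-1)/(S(S-1))] into
   E[sum_i X_i(X_i-1)/(S(S-1))]; a Cauchy-Schwarz estimate bounds this sum
   below by #{i | X_i >= 2}/(2N^2), and the product form of the law of X gives
   E[#{i | X_i >= 2}] = N P(X_1 >= 2), whence c_N >= P(X_1 >= 2)/(2N). *)
From HB Require Import structures.
From mathcomp Require Import all_boot all_order all_algebra.
From mathcomp Require Import all_classical all_reals all_analysis.
From mathcomp Require Import zify ring perm.
Import Order.TTheory GRing.Theory Num.Theory.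
Local Open Scope ring_scope.

Lemma ffact_split (x k t : nat) : (k <= t <= x)%N ->
  (x ^_ t = x ^_ k * (x - k) ^_ (t - k))%N.
Proof.
move=> /andP[kt tx].
have tpos : (0 < (x - t)`!)%N by apply: fact_gt0.
apply/eqP; rewrite -(eqn_pmul2r tpos) ffact_fact // -mulnA.
have -> : (x - t = (x - k) - (t - k))%N by rewrite subnBA // subnK // (leq_trans kt).
rewrite ffact_fact; last by apply: leq_sub2r.
by rewrite ffact_fact // (leq_trans kt).
Qed.

Lemma mul_bin_ffact (x t k : nat) :
  ('C(x, t) * t ^_ k = x ^_ k * (if (t < k)%N then 0 else 'C(x - k, t - k)))%N.
Proof.
case: (ltnP t k) => tk; first by rewrite (ffact_small tk) !muln0.
case: (ltnP x k) => xk.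
  by rewrite (ffact_small xk) bin_small ?mul0n // (leq_trans xk).
case: (ltnP x t) => xt.
  rewrite (bin_small xt) mul0n (@bin_small (x - k)) ?muln0 //.
  by rewrite ltn_sub2r // (leq_trans _ xt).
have fpos : (0 < (t - k)`!)%N by apply: fact_gt0.
apply/eqP; rewrite -(eqn_pmul2r fpos) -mulnA ffact_fact // bin_ffact.
by rewrite -mulnA bin_ffact -ffact_split ?tk.
Qed.

Lemma coef_XD1n (R : comNzRingType) (n j : nat) :
  (('X + 1 : {poly R}) ^+ n)`_j = 'C(n, j)%:R.
Proof.
rewrite exprD1n coef_sum.
under eq_bigr do rewrite coefMn coefXn.
case: (ltnP n j) => nj.
  rewrite bin_small // big1 // => i _.
  have -> : (j == i) = false.
    by apply/negbTE; rewrite neq_ltn (leq_trans (ltn_ord i) nj) orbT.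
  by rewrite mul0rn.
rewrite (bigD1 (Ordinal (nj : (j < n.+1)%N))) //= eqxx mulr1n big1 ?addr0 //.
by move=> i /negbTE; rewrite eq_sym -val_eqE /= => ->; rewrite mul0rn.
Qed.

Section HypergeometricCount.
Variable R : comNzRingType.

(* Generating polynomial of j |-> C(x, j) (j)_k: by absorption it equals
   (x)_k 'X^k ('X + 1)^(x - k). *)
Lemma bin_ffact_gen_poly (B x k : nat) : (x < B)%N ->
  \sum_(j < B) ('C(x, j) * j ^_ k)%:R *: ('X^j : {poly R})
  = (x ^_ k)%:R *: ('X^k * ('X + 1) ^+ (x - k)).
Proof.
move=> xB; apply/polyP => t.
rewrite coef_sum coefZ coefXnM.
under eq_bigr do rewrite coefZ coefXn.
have -> : \sum_(j < B) ('C(x, j) * j ^_ k)%:R * (t == j)%:R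
          = ('C(x, t) * t ^_ k)%:R :> R.
  case: (ltnP t B) => tB.
    rewrite (bigD1 (Ordinal tB)) //= eqxx mulr1 big1 ?addr0 // => i.
    by rewrite -val_eqE /= eq_sym => /negbTE ->; rewrite mulr0.
  rewrite bin_small ?mul0n ?big1 // ?(leq_trans xB) // => i _.
  have -> : (t == i) = false.
    by apply/negbTE; rewrite neq_ltn (leq_trans (ltn_ord i) tB) orbT.
  by rewrite mulr0.
rewrite mul_bin_ffact natrM; case: ltnP => _; first by rewrite mulr0.
by rewrite coef_XD1n.
Qed.

(* Proof: compare the coefficients of 'X^N in the product over i of the
   generating polynomials above, expanded in two ways. *)
Lemma sum_prod_bin_ffact (N B : nat) (x k : 'I_N -> nat) :
  (forall i, x i < B)%N -> (\sum_i k i <= N)%N ->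
  \sum_(m : {ffun 'I_N -> 'I_B}) ((\sum_i (m i : nat) == N)%:R *
      \prod_i ('C(x i, m i) * (m i) ^_ (k i))%:R : R)
  = (\prod_i (x i) ^_ (k i) * 'C(\sum_i x i - \sum_i k i, N - \sum_i k i))%:R.
Proof.
move=> xB KN.
pose F i (j : 'I_B) := ('C(x i, j) * j ^_ (k i))%:R *: ('X^j : {poly R}).
have expand_sum : \prod_i \sum_(j < B) F i j =
    \sum_(m : {ffun 'I_N -> 'I_B})
      (\prod_i ('C(x i, m i) * (m i) ^_ (k i))%:R) *: 'X^(\sum_i (m i : nat)).
  rewrite bigA_distr_bigA /=; apply: eq_bigr => m _.
  rewrite /F; under eq_bigr do rewrite -mul_polyC.
  by rewrite big_split /= -rmorph_prod prodrXr mul_polyC.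
have factor_out : \prod_i \sum_(j < B) F i j =
    (\prod_i (x i) ^_ (k i))%:R *:
      ('X^(\sum_i k i) * ('X + 1) ^+ (\sum_i (x i - k i))).
  rewrite /F; under eq_bigr do rewrite bin_ffact_gen_poly // -mul_polyC.
  by rewrite big_split /= -rmorph_prod big_split /= prodrXr prodrXr mul_polyC natr_prod.
have := congr1 (fun q : {poly R} => q`_N) (etrans (esym expand_sum) factor_out).
rewrite coef_sum /= coefZ coefXnM ltnNge KN /= coef_XD1n.
under eq_bigr do rewrite coefZ coefXn eq_sym mulrC.
move=> ->; rewrite natrM.
case: (boolP [forall i, k i <= x i]%N) => [/forallP kx | /forallPn [i0 hi0]].
  congr (_ * _%:R); congr 'C(_, _).
  apply/eqP; rewrite -(eqn_add2r (\sum_i k i)) subnK; last first.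
    by apply: leq_sum => i _; apply: kx.
  by rewrite -big_split /=; apply/eqP; apply: eq_bigr => i _; rewrite subnK.
rewrite -ltnNge in hi0.
by rewrite (bigD1 i0) //= (ffact_small hi0) mul0n /= !mul0r.
Qed.

End HypergeometricCount.

Section NonnegativeSums.
Variable R : realType.
Local Open Scope ereal_scope.

Lemma esumZl (T : choiceType) (S : set T) (a : T -> \bar R) (r : R) :
  (0 <= r)%R -> (forall i, 0 <= a i) ->
  \esum_(i in S) (r%:E * a i) = r%:E * \esum_(i in S) a i.
Proof.
move=> r0 a0; rewrite /esum -ereal_supZl //; last first.
  by apply/set0P; exists 0; exists set0 => //;
    [exact: fsets_set0 | rewrite fsbig_set0].
congr ereal_sup; apply/seteqP; split => y /=.
  move=> [A AS <-]; exists (\sum_(x \in A) a x); first by exists A.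
  by rewrite ge0_mule_fsumr.
by move=> [z [A AS <-] <-]; exists A => //; rewrite ge0_mule_fsumr.
Qed.

Lemma esumZr (T : choiceType) (S : set T) (a : T -> \bar R) (r : R) :
  (0 <= r)%R -> (forall i, 0 <= a i) ->
  \esum_(i in S) (a i * r%:E) = (\esum_(i in S) a i) * r%:E.
Proof.
move=> r0 a0; rewrite muleC -esumZl //; apply: eq_esum => i _; exact: muleC.
Qed.

Lemma esum_delta (T : choiceType) (c : T) (v : \bar R) : 0 <= v ->
  \esum_(n in [set: T]) (if n == c then v else 0) = v.
Proof.
move=> v0; transitivity (\esum_(n in [set c]) v); last exact: esum_set1.
by rewrite [RHS]esum_mkcond; apply: eq_esum => n _; rewrite in_set1.
Qed.

Lemma esum_pair (T1 T2 : choiceType) (a : T1 -> T2 -> \bar R) :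
  (forall i j, 0 <= a i j) ->
  \esum_(k in [set: T1 * T2]) a k.1 k.2
  = \esum_(i in [set: T1]) \esum_(j in [set: T2]) a i j.
Proof.
by move=> a0; rewrite esum_esum //; congr esum; apply/seteqP; split => // -[].
Qed.

Definition ffun_cons (n : nat) (my : nat * {ffun 'I_n -> nat}) :
    {ffun 'I_n.+1 -> nat} :=
  [ffun i : 'I_n.+1 => if unlift ord0 i is Some j then my.2 j else my.1].
Arguments ffun_cons {n}.

Lemma ffun_cons0 n my : ffun_cons my (@ord0 n) = my.1.
Proof. by rewrite ffunE unlift_none. Qed.

Lemma ffun_consS n my (j : 'I_n) : ffun_cons my (lift ord0 j) = my.2 j.
Proof. by rewrite ffunE liftK. Qed.

Lemma ffun_cons_bij n : bijective (@ffun_cons n).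
Proof.
exists (fun x : {ffun 'I_n.+1 -> nat} => (x ord0, [ffun j => x (lift ord0 j)])).
  move=> [m y] /=; rewrite ffun_cons0; congr pair; apply/ffunP => j.
  by rewrite ffunE ffun_consS.
move=> x; apply/ffunP => i; rewrite ffunE.
by case: unliftP => [j ->|->] //=; rewrite ffunE.
Qed.

(* Sums of products factor over the coordinates (Fubini for product mass
   functions on nat^n): this is what makes the coordinates of X independent. *)
Lemma esum_ffun_prod (n : nat) (a : 'I_n -> nat -> R) (s : 'I_n -> R) :
  (forall i m, 0 <= a i m)%R ->
  (forall i, \esum_(m in [set: nat]) (a i m)%:E = (s i)%:E) ->
  \esum_(x in [set: {ffun 'I_n -> nat}]) (\prod_i a i (x i))%:E = (\prod_i s i)%:E.
Proof.
elim: n a s => [|n IH] a s a0 es.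
  rewrite big_ord0.
  have -> : [set: {ffun 'I_0 -> nat}]%classic = [set [ffun i => 0%N]]%classic.
    by apply/seteqP; split => x // _; apply/ffunP => -[].
  by rewrite esum_set1 big_ord0.
have s0 i : (0 <= s i)%R.
  by rewrite -lee_fin -es; apply: esum_ge0 => m _; rewrite lee_fin.
rewrite (reindex_esum [set: nat * {ffun 'I_n -> nat}] _ (@ffun_cons n)); last first.
  by rewrite setTT_bijective; exact: ffun_cons_bij.
under eq_esum do rewrite big_ord_recl ffun_cons0 /=.
under eq_esum => my _ do under eq_bigr do rewrite ffun_consS.
rewrite (@esum_pair nat {ffun 'I_n -> nat} (fun m y =>
    (a ord0 m * \prod_(i < n) a (lift ord0 i) (y i))%:E)); last first.
  by move=> m y; rewrite lee_fin; apply: mulr_ge0 => //; apply: prodr_ge0.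
under eq_esum => m _.
  rewrite (eq_esum (fun y _ => EFinM _ _)) esumZl //; last first.
    by move=> y; rewrite lee_fin; apply: prodr_ge0.
  rewrite (IH (fun i => a (lift ord0 i)) (fun i => s (lift ord0 i))) //.
  rewrite -EFinM.
  over.
rewrite (eq_esum (fun m _ => EFinM _ _)) esumZr; last 2 first.
- exact: prodr_ge0.
- by move=> m; rewrite lee_fin.
by rewrite es big_ord_recl -EFinM.
Qed.

End NonnegativeSums.

Section ConditionalMoments.
Variables (R : realType) (N : nat) (p : nat -> R).
Hypothesis p_ge0 : forall m, 0 <= p m.
Hypothesis p0 : p 0%N = 0.

Definition config_prob (x : {ffun 'I_N -> nat}) : R := \prod_i p (x i).

Lemma config_prob_ge0 x : 0 <= config_prob x.
Proof. exact: prodr_ge0. Qed.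

Lemma sample_law_ge0 (x n : {ffun 'I_N -> nat}) : 0 <= sample_law R x n.
Proof. by rewrite /sample_law; case: ifP => // _; apply: divr_ge0. Qed.

Lemma indiv_ord (n : {ffun 'I_N -> nat}) (i : 'I_N) : indiv n i = n i.
Proof. by rewrite /indiv valK. Qed.

Lemma config_prob_supp x : config_prob x != 0 ->
  (forall i, 0 < x i)%N /\ (N <= sum_offspring x)%N.
Proof.
move=> px.
have pos i : (0 < x i)%N.
  rewrite lt0n; apply/negP => /eqP xi; move: px.
  by rewrite /config_prob (bigD1 i) //= xi p0 mul0r eqxx.
split => //; rewrite /sum_offspring.
apply: (@leq_trans (\sum_(i < N) 1)%N); first by rewrite sum_nat_const card_ord muln1.
by apply: leq_sum => i _; apply: pos.
Qed.

Lemma eq_cannings_E (f g : {ffun 'I_N -> nat} -> {ffun 'I_N -> nat} -> \bar R) :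
  (forall x n, f x n = g x n) -> cannings_E p f = cannings_E p g.
Proof. by move=> fg; apply: eq_esum => xn _; rewrite fg. Qed.

Lemma cannings_E_cond (g : {ffun 'I_N -> nat} -> {ffun 'I_N -> nat} -> R) :
  (forall x n, 0 <= g x n) ->
  cannings_E p (fun x n => (g x n)%:E) =
  (\esum_(x in [set: {ffun 'I_N -> nat}]) ((config_prob x)%:E *
      \esum_(n in [set: {ffun 'I_N -> nat}]) (sample_law R x n * g x n)%:E))%E.
Proof.
move=> g0; rewrite /cannings_E.
rewrite (@esum_pair R _ _ (fun x n => (cannings_pmf p x n)%:E * (g x n)%:E)%E);
  last first.
  move=> x n; rewrite -EFinM lee_fin; apply: mulr_ge0 => //.
  by apply: mulr_ge0; [exact: config_prob_ge0 | exact: sample_law_ge0].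
apply: eq_esum => x _; rewrite -esumZl; last 2 first.
- exact: config_prob_ge0.
- by move=> n; rewrite lee_fin; apply: mulr_ge0 => //; exact: sample_law_ge0.
by apply: eq_esum => n _; rewrite -!EFinM /cannings_pmf mulrA.
Qed.

Definition bounded_config B (m : {ffun 'I_N -> 'I_B}) : {ffun 'I_N -> nat} :=
  [ffun i => val (m i)].
Arguments bounded_config {B}.

Lemma bounded_config_inj B : injective (@bounded_config B).
Proof.
move=> m1 m2 e; apply/ffunP => i; apply: val_inj.
by have := congr1 (fun f : {ffun 'I_N -> nat} => f i) e; rewrite /= !ffunE.
Qed.

(* The conditional law of nu has finite support (nu_i <= N < B), so the
   conditional expectation is a finite sum. *)
Lemma sample_esum_finite B x (g : {ffun 'I_N -> nat} -> R) : (N < B)%N ->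
  (forall n, 0 <= g n) ->
  (\esum_(n in [set: {ffun 'I_N -> nat}]) (sample_law R x n * g n)%:E
  = (\sum_(m : {ffun 'I_N -> 'I_B})
        sample_law R x (bounded_config m) * g (bounded_config m))%:E)%E.
Proof.
move=> NB g0.
pose G (m : {ffun 'I_N -> 'I_B}) :=
  (sample_law R x (bounded_config m) * g (bounded_config m))%:E.
(* Each term of the sum over n is a sum with at most one nonzero term. *)
have single n : (sample_law R x n * g n)%:E =
    (\sum_(m : {ffun 'I_N -> 'I_B}) (if n == bounded_config m then G m else 0))%E.
  case: (boolP (sample_law R x n == 0)) => [/eqP L0 | Ln].
    rewrite L0 mul0r big1 // => m _; case: eqP => // nm.
    by rewrite /G -nm L0 mul0r.
  have sN : (\sum_i n i == N)%N.
    by move: Ln; rewrite /sample_law; case: ifP => //; rewrite eqxx.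
  have nB i : (n i < B)%N.
    apply: leq_ltn_trans NB; rewrite -[X in (_ <= X)%N](eqP sN).
    by rewrite (bigD1 i) //= leq_addr.
  pose m0 : {ffun 'I_N -> 'I_B} := [ffun i => Ordinal (nB i)].
  have em0 : n = bounded_config m0 by apply/ffunP => i; rewrite !ffunE.
  rewrite (bigD1 m0) //= -em0 eqxx /G -em0 big1 ?adde0 // => m mm0.
  case: eqP => // e; move: mm0; rewrite em0 in e.
  by move/bounded_config_inj: e => ->; rewrite eqxx.
have G0 m : (0 <= G m)%E.
  by rewrite lee_fin; apply: mulr_ge0 => //; exact: sample_law_ge0.
rewrite (eq_esum (fun n _ => single n)) esum_sum; last first.
  by move=> n m _ _; case: ifP.
by rewrite -sumEFin; apply: eq_bigr => m _; apply: esum_delta.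
Qed.

Definition hypergeom_moment (x : {ffun 'I_N -> nat}) (k : nat -> nat) : R :=
  (\prod_(j < N) (indiv x j) ^_ (k j) * N ^_ (\sum_(j < N) k j))%:R
    / ((sum_offspring x) ^_ (\sum_(j < N) k j))%:R.

(* The hypergeometric factorial moment formula, as a finite sum: by the
   Vandermonde-type count and the absorption identity
   C(S, N) (N)_K = (S)_K C(S - K, N - K). *)
Lemma sample_factorial_moment x (k : nat -> nat) :
  (\sum_(j < N) k j <= N)%N -> (N <= sum_offspring x)%N ->
  \sum_(m : {ffun 'I_N -> 'I_((sum_offspring x + N).+1)})
     sample_law R x (bounded_config m)
       * (\prod_(j < N) (indiv (bounded_config m) j) ^_ (k j))%:R
  = hypergeom_moment x k.
Proof.
move=> KN SN; rewrite /hypergeom_moment.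
set S := sum_offspring x; set K := (\sum_(j < N) k j)%N.
have xB i : (x i < (S + N).+1)%N.
  rewrite ltnS (leq_trans _ (leq_addr _ _)) //.
  by rewrite /S /sum_offspring (bigD1 i) //= leq_addr.
have count := @sum_prod_bin_ffact R N _ x (fun i => k i) xB KN.
have prodE (y : 'I_N -> nat) :
    (\prod_(j < N) indiv [ffun i => y i] j ^_ k j = \prod_(j < N) y j ^_ k j)%N.
  by apply: eq_bigr => j _; rewrite indiv_ord ffunE.
transitivity ((\sum_(m : {ffun 'I_N -> 'I_((S + N).+1)})
   ((\sum_i (m i : nat) == N)%:R * \prod_i ('C(x i, m i) * (m i) ^_ (k i))%:R : R))
   / ('C(S, N)%:R : R)).
  rewrite mulr_suml; apply: eq_bigr => m _.
  rewrite prodE /sample_law /bounded_config.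
  under eq_bigr do rewrite ffunE.
  under [\prod_i 'C(_, _)]eq_bigr do rewrite ffunE.
  case: ifP => _; last by rewrite !mul0r.
  rewrite mul1r mulrAC; congr (_ / _).
  by rewrite -natrM -big_split natr_prod.
rewrite count.
have C_neq0 : ('C(S, N)%:R != 0 :> R) by rewrite pnatr_eq0 -lt0n bin_gt0.
have F_neq0 : ((S ^_ K)%:R != 0 :> R).
  by rewrite pnatr_eq0 -lt0n ffact_gt0 (leq_trans KN).
apply/eqP; rewrite eqr_div //; apply/eqP; rewrite -!natrM; congr (_%:R).
have -> : (\prod_(j < N) indiv x j ^_ k j = \prod_i x i ^_ k i)%N.
  by apply: eq_bigr => j _; rewrite indiv_ord.
rewrite -!mulnA; congr (_ * _)%N.
have := mul_bin_ffact S N K; rewrite ltnNge KN /= => absorb.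
by rewrite mulnC -/K -absorb mulnC.
Qed.

Lemma cond_factorial_moment x (k : nat -> nat) :
  (\sum_(j < N) k j <= N)%N -> (N <= sum_offspring x)%N ->
  (\esum_(n in [set: {ffun 'I_N -> nat}])
     (sample_law R x n * (\prod_(j < N) (indiv n j) ^_ (k j))%:R)%:E
  = (hypergeom_moment x k)%:E)%E.
Proof.
move=> KN SN; rewrite (@sample_esum_finite (sum_offspring x + N).+1) //.
- by rewrite sample_factorial_moment.
- by rewrite ltnS leq_addl.
Qed.

(* The conditional law of nu has total mass one (the case k = 0). *)
Lemma sample_mass x : (N <= sum_offspring x)%N ->
  (\esum_(n in [set: {ffun 'I_N -> nat}]) (sample_law R x n)%:E = 1)%E.
Proof.
move=> SN; have := @cond_factorial_moment x (fun=> 0%N).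
rewrite big1 // => /(_ isT SN); under eq_esum do rewrite big1 // mulr1.
by move=> ->; rewrite /hypergeom_moment !big1 // ?divr1.
Qed.

Lemma cannings_E_factorial_moment (k : nat -> nat) :
  (\sum_(j < N) k j <= N)%N ->
  cannings_E p (fun x n : {ffun 'I_N -> nat} =>
                  (\prod_(j < N) (indiv n j) ^_ (k j))%:R%:E)
  = (\esum_(x in [set: {ffun 'I_N -> nat}])
      (config_prob x * hypergeom_moment x k)%:E)%E.
Proof.
move=> KN; rewrite cannings_E_cond; last by move=> x n; exact: ler0n.
apply: eq_esum => x _.
have [/eqP -> | px] := boolP (config_prob x == 0); first by rewrite mul0e mul0r.
have [_ SN] := config_prob_supp _ px.
by rewrite cond_factorial_moment // -EFinM.
Qed.

Lemma cannings_E_fun (h : {ffun 'I_N -> nat} -> R) : (forall x, 0 <= h x) ->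
  cannings_E p (fun x n : {ffun 'I_N -> nat} => (h x)%:E) =
  (\esum_(x in [set: {ffun 'I_N -> nat}]) (config_prob x * h x)%:E)%E.
Proof.
move=> h0; rewrite cannings_E_cond; last by move=> x n; exact: h0.
apply: eq_esum => x _.
have [/eqP -> | px] := boolP (config_prob x == 0); first by rewrite mul0e mul0r.
have [_ SN] := config_prob_supp _ px.
under eq_esum do rewrite mulrC EFinM.
rewrite esumZl //; last by move=> n; rewrite lee_fin sample_law_ge0.
by rewrite sample_mass // mule1 -EFinM.
Qed.

Definition permute_config (s : {perm 'I_N}) (x : {ffun 'I_N -> nat}) :
  {ffun 'I_N -> nat} := [ffun j => x (s j)].

Lemma config_prob_perm s x : config_prob (permute_config s x) = config_prob x.
Proof.
rewrite /config_prob [RHS](reindex_inj (@perm_inj _ s)) /=.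
by apply: eq_bigr => j _; rewrite ffunE.
Qed.

Lemma sum_offspring_perm s x :
  sum_offspring (permute_config s x) = sum_offspring x.
Proof.
rewrite /sum_offspring [RHS](reindex_inj (@perm_inj _ s)) /=.
by apply: eq_bigr => j _; rewrite ffunE.
Qed.

Lemma esum_config_perm s (f : {ffun 'I_N -> nat} -> R) :
  (\esum_(x in [set: {ffun 'I_N -> nat}]) (config_prob x * f (permute_config s x))%:E
  = \esum_(x in [set: {ffun 'I_N -> nat}]) (config_prob x * f x)%:E)%E.
Proof.
rewrite [RHS](reindex_esum [set: {ffun 'I_N -> nat}] _ (permute_config s)).
  by apply: eq_esum => x _; rewrite config_prob_perm.
rewrite setTT_bijective; exists (permute_config s^-1) => x;
  by apply/ffunP => j; rewrite !ffunE ?permK ?permKV.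
Qed.

End ConditionalMoments.

Definition zero_extend (r : nat) (k : 'I_r -> nat) (j : nat) : nat :=
  if @insub nat (fun i => i < r)%N 'I_r j is Some j' then k j' else 0%N.
Arguments zero_extend {r}.

Lemma big_zero_extend (T : Type) (idx : T) (op : Monoid.law idx)
    (r N : nat) (k : 'I_r -> nat) (F : nat -> nat -> T) :
  (r <= N)%N -> (forall j, F j 0%N = idx) ->
  \big[op/idx]_(j < r) F j (k j) = \big[op/idx]_(j < N) F j (zero_extend k j).
Proof.
move=> rN F0.
have -> : \big[op/idx]_(j < r) F j (k j)
    = \big[op/idx]_(j < r) F j (zero_extend k j).
  by apply: eq_bigr => j _; rewrite /zero_extend valK.
rewrite (big_ord_widen N (fun j => F j (zero_extend k j))) // big_mkcond /=.
by apply: eq_bigr => j _; case: ifP => // jr; rewrite /zero_extend insubF.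
Qed.

Lemma factorial_moment_identity (R : realType) (N : nat) (p : nat -> R)
    (r : nat) (k : 'I_r -> nat) :
  (forall m, 0 <= p m) -> p 0%N = 0 -> (r <= N)%N -> (\sum_j k j <= N)%N ->
  (cannings_E p (fun x n : {ffun 'I_N -> nat} =>
       (\prod_(j < r) (indiv n j) ^_ (k j))%:R%:E)
     * ((N ^_ (\sum_j k j))%:R^-1)%:E
   = cannings_E p (fun x n : {ffun 'I_N -> nat} =>
       ((\prod_(j < r) (indiv x j) ^_ (k j))%:R
        / ((sum_offspring x) ^_ (\sum_j k j))%:R)%:E))%E.
Proof.
move=> p_ge0 p0 rN KN.
have extE (y : {ffun 'I_N -> nat}) : (\prod_(j < r) indiv y j ^_ k j
    = \prod_(j < N) indiv y j ^_ zero_extend k j)%N.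
  exact: (@big_zero_extend _ _ _ r N k (fun j m => indiv y j ^_ m) rN (fun=> erefl)).
have KE : (\sum_j k j = \sum_(j < N) zero_extend k j)%N.
  exact: (@big_zero_extend _ _ _ r N k (fun _ m => m) rN (fun=> erefl)).
rewrite (@eq_cannings_E _ _ _ _ (fun x n =>
    (\prod_(j < N) indiv n j ^_ zero_extend k j)%:R%:E)); last first.
  by move=> x n; rewrite extE.
rewrite cannings_E_factorial_moment -?KE // cannings_E_fun //.
rewrite -esumZr; last 2 first.
- by rewrite invr_ge0.
- by move=> x; rewrite lee_fin mulr_ge0 ?config_prob_ge0 ?divr_ge0.
apply: eq_esum => x _; rewrite -EFinM -mulrA /hypergeom_moment -KE -extE natrM.
have NK_neq0 : ((N ^_ (\sum_j k j))%:R != 0 :> R).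
  by rewrite pnatr_eq0 -lt0n ffact_gt0.
by rewrite mulrAC mulfK.
Qed.

Lemma coal_prob_eq (R : realType) (N : nat) (p : nat -> R) :
  (forall m, 0 <= p m) -> p 0%N = 0 -> (1 < N)%N ->
  coal_prob N p = (N%:R%:E * cannings_E p (fun x n : {ffun 'I_N -> nat} =>
      ((indiv x 0 * (indiv x 0).-1)%:R
        / (sum_offspring x * (sum_offspring x).-1)%:R)%:E))%E.
Proof.
move=> p_ge0 p0 N1.
have ffact2 m : (m ^_ 2 = m * m.-1)%N by rewrite ffactnS ffactn1.
have := @factorial_moment_identity R N p 1 (fun=> 2%N) p_ge0 p0 (ltnW N1).
rewrite !big_ord1 /= => /(_ N1) moment.
rewrite /coal_prob.
have -> : (N.-1)%:R^-1 = (N ^_ 2)%:R^-1 * N%:R :> R.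
  rewrite ffact2 natrM invfM mulrAC mulVf ?mul1r // pnatr_eq0 -lt0n ltnW //.
rewrite EFinM muleA.
rewrite (@eq_cannings_E _ _ _ _ (fun x n =>
    (\prod_(j < 1) indiv n j ^_ 2)%:R%:E)); last by move=> x n; rewrite big_ord1.
rewrite moment muleC; congr (_ * _)%E.
by apply: eq_cannings_E => x n; rewrite big_ord1 !ffact2.
Qed.

Section CountingBound.
Local Open Scope nat_scope.

Lemma sqr_sum_le (N : nat) (y : 'I_N -> nat) :
  (\sum_i y i) * (\sum_i y i) <= N * \sum_i y i * y i.
Proof.
rewrite -(@leq_pmul2l 2) //.
have -> : 2 * ((\sum_i y i) * (\sum_i y i)) = \sum_i \sum_j 2 * (y i * y j).
  rewrite big_distrl /= big_distrr /=; apply: eq_bigr => i _.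
  by rewrite big_distrr /= big_distrr.
have <- : \sum_i \sum_(j : 'I_N) (y i * y i + y j * y j)
          = 2 * (N * \sum_i y i * y i).
  under eq_bigr => i _ do rewrite big_split /= sum_nat_const card_ord.
  by rewrite big_split /= sum_nat_const card_ord -big_distrr /= mulnC; lia.
apply: leq_sum => i _; apply: leq_sum => j _.
exact: (nat_Cauchy (y i) (y j)).1.
Qed.

(* With T = S - N and
   M = #{i | x_i >= 2} <= min(N, T), use S^2 <= 2N^2 + 2T^2 and the
   Cauchy-Schwarz bound T^2 <= N sum_i (x_i - 1)^2. *)
Lemma count_mul_pairs_le (N : nat) (x : 'I_N -> nat) : (forall i, 0 < x i) ->
  (\sum_i (1 < x i)) * ((\sum_i x i) * (\sum_i x i).-1)
    <= 2 * N * N * \sum_i x i * (x i).-1.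
Proof.
move=> xpos.
set M := \sum_i (1 < x i); set T := \sum_i (x i).-1.
set Y := \sum_i (x i).-1 * (x i).-1.
have SE : \sum_i x i = N + T.
  rewrite /T -[X in X + _](card_ord N) -sum1_card -big_split /=.
  by apply: eq_bigr => i _; have := xpos i; lia.
have QE : \sum_i x i * (x i).-1 = Y + T.
  rewrite /Y /T -big_split /=.
  by apply: eq_bigr => i _; have := xpos i; nia.
have MT : M <= T by apply: leq_sum => i _; have := xpos i; case: (x i) => [|[|k]].
have MN : M <= N.
  rewrite /M -[X in _ <= X](card_ord N) -sum1_card.
  by apply: leq_sum => i _; case: (1 < x i).
have CS : T * T <= N * Y by apply: sqr_sum_le.
have SQ : (N + T) * (N + T) <= 2 * (N * N) + 2 * (T * T).
  by have := (nat_Cauchy N T).1; have := sqrnD N T; lia.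
rewrite SE QE; apply: (@leq_trans (M * ((N + T) * (N + T)))).
  by rewrite leq_mul // leq_mul // leq_pred.
apply: (@leq_trans (M * (2 * (N * N) + 2 * (T * T)))); first exact: leq_mul.
have : M * (T * T) <= N * (N * Y) by apply: leq_mul.
nia.
Qed.

End CountingBound.

Section CoalescenceBound.
Variables (R : realType) (N : nat) (p : nat -> R).
Hypothesis law : offspring_law p.

Let p_ge0 : forall m, 0 <= p m. Proof. by case: law. Qed.
Let p0 : p 0%N = 0. Proof. by case: law. Qed.
Let p_mass : (\esum_(m in [set: nat]) (p m)%:E = 1)%E. Proof. by case: law. Qed.

Local Notation config_prob := (config_prob R N p).

Lemma prob_ge2E :
  prob_ge2 p = (\esum_(m in [set: nat]) (p m * (1 < m)%:R)%:E)%E.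
Proof.
rewrite /prob_ge2 esum_mkcond; apply: eq_esum => m _.
case: (boolP (1 < m)%N) => m1; first by rewrite mem_set ?mulr1.
by rewrite memNset ?mulr0 //=; apply/negP.
Qed.

Lemma prob_ge2_fin : exists2 P : R, prob_ge2 p = P%:E & 0 <= P <= 1.
Proof.
have P0 : (0 <= prob_ge2 p)%E by apply: esum_ge0 => m _; rewrite lee_fin.
have P1 : (prob_ge2 p <= 1)%E.
  rewrite prob_ge2E -p_mass; apply: le_esum => m _; rewrite lee_fin.
  by case: (1 < m)%N; rewrite ?mulr1 ?mulr0.
have Pfin : prob_ge2 p \is a fin_num by rewrite ge0_fin_numE // (le_lt_trans P1) ?ltey.
by exists (fine (prob_ge2 p)); rewrite ?fineK // -!lee_fin fineK // P0 P1.
Qed.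

(* Marginal law: P(X_i >= 2) = P(X_1 >= 2) for every individual i, computed
   from the product form of the law of X. *)
Lemma marginal_ge2 (i : 'I_N) :
  (\esum_(x in [set: {ffun 'I_N -> nat}]) (config_prob x * (1 < x i)%:R)%:E
  = prob_ge2 p)%E.
Proof.
have [P PE _] := prob_ge2_fin.
pose a (j : 'I_N) (m : nat) := p m * (if j == i then (1 < m)%:R else 1).
pose s (j : 'I_N) := if j == i then P else 1.
have sP : \prod_j s j = P by rewrite /s -big_mkcond /= big_pred1_eq.
rewrite PE -sP -(@esum_ffun_prod R N a s); last 2 first.
- by move=> j m; rewrite /a mulr_ge0 //; case: (j == i) => //; case: (1 < m)%N.
- move=> j; rewrite /a /s; case: (j == i); first by rewrite -PE prob_ge2E.
  by under eq_esum do rewrite mulr1; exact: p_mass.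
apply: eq_esum => x _; congr EFin.
rewrite /config_prob /a big_split /=; congr (_ * _).
by rewrite -big_mkcond /= big_pred1_eq.
Qed.

(* X_i(X_i - 1)/(S(S - 1)): the chance that two distinct offspring drawn
   from the S offspring both descend from individual i. *)
Definition pair_frac (x : {ffun 'I_N -> nat}) (i : 'I_N) : R :=
  (x i * (x i).-1)%:R / (sum_offspring x * (sum_offspring x).-1)%:R.

(* By part 2 and exchangeability, c_N = E[sum_i X_i(X_i - 1)/(S(S - 1))]. *)
Lemma coal_prob_sum : (1 < N)%N ->
  coal_prob N p = (\esum_(x in [set: {ffun 'I_N -> nat}])
                     (config_prob x * \sum_i pair_frac x i)%:E)%E.
Proof.
move=> N1; pose i0 : 'I_N := Ordinal (ltnW N1).
have exchange i :
  (\esum_(x in [set: {ffun 'I_N -> nat}]) (config_prob x * pair_frac x i0)%:E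
   = \esum_(x in [set: {ffun 'I_N -> nat}]) (config_prob x * pair_frac x i)%:E)%E.
  rewrite -(@esum_config_perm R N p (tperm i0 i) (pair_frac ^~ i)).
  by apply: eq_esum => x _; rewrite /pair_frac sum_offspring_perm ffunE tpermR.
rewrite coal_prob_eq // cannings_E_fun //.
have frac0 (x : {ffun 'I_N -> nat}) :
    (indiv x 0 * (indiv x 0).-1)%:R / (sum_offspring x * (sum_offspring x).-1)%:R
    = pair_frac x i0 by rewrite /pair_frac -(@indiv_ord N x i0).
under eq_esum do rewrite frac0.
transitivity (\sum_(i < N) \esum_(x in [set: {ffun 'I_N -> nat}])
                             (config_prob x * pair_frac x i)%:E)%E.
  by rewrite mule_natl -(eq_bigr _ (fun i _ => exchange i)) sumr_const card_ord.
rewrite -esum_sum; last first.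
  by move=> x i _ _; rewrite lee_fin mulr_ge0 ?config_prob_ge0 ?divr_ge0.
by apply: eq_esum => x _; rewrite sumEFin mulr_sumr.
Qed.

Lemma pair_frac_lower x : (1 < N)%N -> config_prob x != 0 ->
  (\sum_i (1 < x i))%:R / (2 * N * N)%:R <= \sum_i pair_frac x i.
Proof.
move=> N1 px; have [xpos SN] := @config_prob_supp R N p p0 x px.
have D_gt0 : 0 < (sum_offspring x * (sum_offspring x).-1)%:R :> R.
  rewrite ltr0n muln_gt0 -subn1 subn_gt0 (leq_trans N1 SN).
  by rewrite (leq_trans (ltnW N1) SN).
have E_gt0 : 0 < (2 * N * N)%:R :> R by rewrite ltr0n !muln_gt0 (ltnW N1).
rewrite /pair_frac -mulr_suml -natr_sum ler_pdivrMr // mulrAC ler_pdivlMr //.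
by rewrite -!natrM ler_nat [X in (_ <= X)%N]mulnC count_mul_pairs_le.
Qed.

(* E[#{i | X_i >= 2}] = N P(X_1 >= 2), by linearity and the marginal law. *)
Lemma expected_count_ge2 :
  (\esum_(x in [set: {ffun 'I_N -> nat}])
     (config_prob x * (\sum_i (1 < x i))%:R)%:E = N%:R%:E * prob_ge2 p)%E.
Proof.
under eq_esum do rewrite natr_sum mulr_sumr -sumEFin.
rewrite esum_sum; last first.
  by move=> x i _ _; rewrite lee_fin mulr_ge0 ?config_prob_ge0.
under eq_bigr do rewrite marginal_ge2.
by rewrite sumr_const card_ord mule_natl.
Qed.

(* Part 3: c_N >= P(X_1 >= 2)/(2N) >= P(X_1 >= 2)^2/(2N). *)
Lemma coal_prob_lower : (1 < N)%N ->
  ((prob_ge2 p * prob_ge2 p) * ((2 * N)%:R^-1)%:E <= coal_prob N p)%E.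
Proof.
move=> N1; have [P PE /andP[P_ge0 P_le1]] := prob_ge2_fin.
set E := (2 * N * N)%N.
have E_gt0 : 0 < E%:R :> R by rewrite ltr0n !muln_gt0 (ltnW N1).
have count_le : (\esum_(x in [set: {ffun 'I_N -> nat}])
    (config_prob x * ((\sum_i (1 < x i))%:R / E%:R))%:E <= coal_prob N p)%E.
  rewrite coal_prob_sum //; apply: le_esum => x _; rewrite lee_fin.
  have [/eqP -> | px] := boolP (config_prob x == 0); first by rewrite !mul0r.
  by rewrite ler_wpM2l ?config_prob_ge0 ?pair_frac_lower.
apply: le_trans count_le.
under eq_esum do rewrite mulrA EFinM.
rewrite esumZr; last 2 first.
- by rewrite invr_ge0 ltW.
- by move=> x; rewrite lee_fin mulr_ge0 ?config_prob_ge0.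
rewrite expected_count_ge2 PE -!EFinM lee_fin.
have -> : N%:R * P / E%:R = P / (2 * N)%:R.
  by rewrite /E !natrM; field; rewrite pnatr_eq0 -lt0n (ltnW N1).
by rewrite ler_wpM2r ?invr_ge0 // ler_piMr.
Qed.

End CoalescenceBound.

Theorem lemma2p2 (R : realType) (N : nat) (p : nat -> R) :
  offspring_law p ->
  (forall (r : nat) (k : 'I_r -> nat),
     (forall j, 2 <= k j)%N -> (\sum_j k j < N)%N ->
     (@cannings_E R N p (fun x n => (\prod_(j < r) (indiv n j) ^_ (k j))%:R%:E)
        * ((N ^_ (\sum_j k j))%:R^-1)%:E
      = @cannings_E R N p (fun x n =>
          ((\prod_(j < r) (indiv x j) ^_ (k j))%:R
           / ((sum_offspring x) ^_ (\sum_j k j))%:R)%:E))%E)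
  /\ ((1 < N)%N ->
      @coal_prob R N p
      = (N%:R%:E * @cannings_E R N p (fun x n =>
          ((indiv x 0 * (indiv x 0).-1)%:R
           / (sum_offspring x * (sum_offspring x).-1)%:R)%:E))%E)
  /\ ((1 < N)%N ->
      ((prob_ge2 p * prob_ge2 p) * ((2 * N)%:R^-1)%:E <= @coal_prob R N p)%E).
Proof.
move=> law; have [p_ge0 p0 _] := law.
split=> [r k k_ge2 KN|]; last first.
  by split; [exact: coal_prob_eq | exact: coal_prob_lower].
(* Each k_j >= 1, so r <= K < N. *)
have r_le_K : (r <= \sum_j k j)%N.
  rewrite -[r in (r <= _)%N]card_ord -sum1_card.
  by apply: leq_sum => j _; exact: leq_trans (k_ge2 j).
by apply: factorial_moment_identity; rewrite // ltnW // (leq_ltn_trans r_le_K).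
Qed.
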